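(* Let $G$ be a simple stochastic game, $A$ a set of arcs of $G$, and $\sigma,\sigma'$ two positional MAX strategies such that $\sigma' \succ_{G[A,\sigma]} \sigma$. Then $Z(\sigma')\subseteq Z(\sigma)$, where absorbing sets are taken in $G$.
   Context: A simple stochastic game (SSG) $G$ is a finite directed graph whose vertex set $V$ is partitioned into MAX vertices, MIN vertices, random vertices and a nonempty set $V_S$ of sinks; every non-sink vertex has at least one outgoing arc, every sink has exactly one outgoing arc, a self-loop; each random vertex $x$ carries a rational probability distribution $p_x$ on its out-neighbourhood, positive on every out-neighbour; each sink $s$ has rational value $\mathrm{Val}(s)\in[0,1]$. A positional MAX (resp. MIN) strategy assigns to each MAX (resp. MIN) vertex one of its out-neighbours. Under $\sigma,\tau$ from start $x_0$, the random play moves from MAX vertex $x$ to $\sigma(x)$, from MIN vertex $x$ to $\tau(x)$, from random vertex $x$ to an out-neighbour drawn by $p_x$ independently, and stays at a sink once reached; its value is $\mathrm{Val}(s)$ if it reaches sink $s$, else $0$, and $v^G_{\sigma,\tau}(x_0)$ is its expectation. $v^G_\sigma:=v^G_{\sigma,\tau}$ for a best response $\tau$, i.e. a MIN strategy with $v_{\sigma,\tau}\le v_{\sigma,\tau'}$ pointwise for all MIN strategies $\tau'$ (a positional one exists). Vectors are compared pointwise; $v>v'$ means $v\ge v'$ and $v\ne v'$. We write $\sigma'\succ_H\sigma$ (in a game $H$) if $v^H_{\sigma'}>v^H_\sigma$ and, for every MAX vertex $x$ with $v^H_{\sigma'}(x)=v^H_\sigma(x)$, $\sigma'(x)=\sigma(x)$.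 Transformed game: $G[A,\sigma]$ is obtained from a copy of $G$ by replacing each arc $e=(x,y)\in A$ by an arc $(x,s_e)$ to a new sink $s_e$ of value $v^G_\sigma(y)$ (for random $x$, $p_x(s_e)=p_x(y)$); $y$ is kept. Strategies of $G$ and $G[A,\sigma]$ are identified, and value vectors of $G[A,\sigma]$ are compared only on vertices of $G$. Absorbing sets: an absorbing set for $(\sigma,\tau)$ is a set $Z\subseteq V\setminus V_S$ such that from any vertex of $Z$, playing $(\sigma,\tau)$, the probability of reaching $V\setminus Z$ is zero; $Z(\sigma,\tau)$ is the union of all absorbing sets for $(\sigma,\tau)$; and $Z(\sigma)$ is the inclusion-wise largest of the sets $Z(\sigma,\tau)$ over positional MIN strategies $\tau$ (it exists and equals $Z(\sigma,\tau)$ for some positional best response $\tau$ to $\sigma$). *)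

From HB Require Import structures.
From mathcomp Require Import all_boot all_order all_algebra.
From mathcomp Require Import all_classical all_reals all_analysis.
Set Implicit Arguments. Unset Strict Implicit. Unset Printing Implicit Defensive.
Import Order.TTheory GRing.Theory Num.Theory.
Import numFieldNormedType.Exports.
Local Open Scope ring_scope.

Inductive vkind := Vmax | Vmin | Vrand | Vsink.

Definition is_max k := if k is Vmax then true else false.
Definition is_min k := if k is Vmin then true else false.
Definition is_rand k := if k is Vrand then true else false.
Definition is_sink k := if k is Vsink then true else false.

Record ssg (R : realType) (V : finType) := SSG {
  vk : V -> vkind;
  garc : rel V;
  gprob : V -> V -> R;
  sinkval : V -> R
}.
Arguments SSG {R V}.

Section Games.
Variables (R : realType) (V : finType).
Implicit Types (G : ssg R V).

Definition sinks G : {set V} := [set x | is_sink (vk G x)].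

Definition ssg_wf G : Prop :=
  [/\ (exists s, is_sink (vk G s)),
      (forall x, ~~ is_sink (vk G x) -> exists y, garc G x y),
      (forall s y, is_sink (vk G s) -> (garc G s y <-> y = s)),
      (forall x, is_rand (vk G x) ->
         [/\ forall y, garc G x y -> 0 < gprob G x y,
             forall y, ~~ garc G x y -> gprob G x y = 0 &
             \sum_(y : V) gprob G x y = 1])
    & (forall s, is_sink (vk G s) -> 0 <= sinkval G s <= 1)].

Definition ssg_rational G : Prop :=
  (forall x y, is_rand (vk G x) -> exists q : rat, gprob G x y = ratr q) /\
  (forall s, is_sink (vk G s) -> exists q : rat, sinkval G s = ratr q).

(* Positional strategies are functions V -> V; only their values at MAX
   (resp. MIN) vertices matter. *)
Definition max_strategy G (sigma : {ffun V -> V}) : bool :=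
  [forall x, is_max (vk G x) ==> garc G x (sigma x)].
Definition min_strategy G (tau : {ffun V -> V}) : bool :=
  [forall x, is_min (vk G x) ==> garc G x (tau x)].

Definition trans G (sigma tau : {ffun V -> V}) (x y : V) : R :=
  match vk G x with
  | Vmax => (sigma x == y)%:R
  | Vmin => (tau x == y)%:R
  | Vrand => gprob G x y
  | Vsink => (x == y)%:R
  end.

(* hval n x = expected value of the play after n steps
   (Val(s) if a sink s has been reached by then, 0 otherwise). *)
Fixpoint hval G (sigma tau : {ffun V -> V}) (n : nat) : V -> R :=
  fun x =>
  match n with
  | 0 => if is_sink (vk G x) then sinkval G x else 0
  | n'.+1 => if is_sink (vk G x) then sinkval G x
             else \sum_(y : V) trans G sigma tau x y * hval G sigma tau n' y
  end.

Definition vals G (sigma tau : {ffun V -> V}) (x : V) : R :=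
  limn (fun n => hval G sigma tau n x).

Definition best_response G (sigma tau : {ffun V -> V}) : bool :=
  min_strategy G tau &&
  [forall tau' : {ffun V -> V}, min_strategy G tau' ==>
     [forall x, vals G sigma tau x <= vals G sigma tau' x]].

Definition vsig G (sigma : {ffun V -> V}) (x : V) : R :=
  match [pick tau | best_response G sigma tau] with
  | Some tau => vals G sigma tau x
  | None => 0
  end.

Fixpoint rprob G (sigma tau : {ffun V -> V}) (T : {set V}) (n : nat) : V -> R :=
  fun x =>
  match n with
  | 0 => (x \in T)%:R
  | n'.+1 => if x \in T then 1
             else \sum_(y : V) trans G sigma tau x y * rprob G sigma tau T n' y
  end.

Definition reach_prob G (sigma tau : {ffun V -> V}) (T : {set V}) (x : V) : R :=
  limn (fun n => rprob G sigma tau T n x).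

Definition absorbing G (sigma tau : {ffun V -> V}) (Z : {set V}) : bool :=
  (Z \subset ~: sinks G) &&
  [forall x in Z, reach_prob G sigma tau (~: Z) x == 0].

Definition Zst G (sigma tau : {ffun V -> V}) : {set V} :=
  \bigcup_(Z | absorbing G sigma tau Z) Z.

Definition Zsig G (sigma : {ffun V -> V}) : {set V} :=
  match [pick tau | min_strategy G tau &&
           [forall tau' : {ffun V -> V}, min_strategy G tau' ==>
              (Zst G sigma tau' \subset Zst G sigma tau)]] with
  | Some tau => Zst G sigma tau
  | None => finset.set0
  end.

End Games.

Section Transform.
Variables (R : realType) (V : finType).
Variables (G : ssg R V) (A : {set V * V}) (sigma0 : {ffun V -> V}).

(* Vertices: those of G (inl) plus one new sink s_e per garc e in A (inr). *)
Definition tV : finType := (V + {e : V * V | e \in A})%type.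

Definition tvk (z : tV) : vkind :=
  match z with inl x => vk G x | inr _ => Vsink end.

Definition tarc (z w : tV) : bool :=
  match z, w with
  | inl x, inl y => garc G x y && ((x, y) \notin A)
  | inl x, inr e => ((val e).1 == x) && garc G x (val e).2
  | inr e, w => w == inr e
  end.

Definition tprob (z w : tV) : R :=
  match z, w with
  | inl x, inl y => if (x, y) \in A then 0 else gprob G x y
  | inl x, inr e => if (val e).1 == x then gprob G x (val e).2 else 0
  | inr _, _ => 0
  end.

Definition tsval (z : tV) : R :=
  match z with
  | inl x => sinkval G x
  | inr e => vsig G sigma0 (val e).2
  end.

Definition transformed : ssg R tV := SSG tvk tarc tprob tsval.

(* Identification of a strategy of G with a strategy of G[A, sigma0]:
   choosing y at x becomes choosing s_(x,y) when (x,y) is in A. *)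
Definition lift_strat (s : {ffun V -> V}) : {ffun tV -> tV} :=
  [ffun z : tV => match z with
    | inl x => match @insub (V * V) (fun e => e \in A) _ (x, s x) with
               | Some e => inr e
               | None => inl (s x)
               end
    | inr e => inr e
    end].

End Transform.

Section Succ.
Variables (R : realType) (V : finType).
Implicit Types (G : ssg R V).

(* sigma' \succ_{G[A,sigma]} sigma, value vectors of G[A,sigma] being
   compared on the vertices of G only. *)
Definition succ_transformed G (A : {set V * V}) (sigma sigma' : {ffun V -> V}) : Prop :=
  let H := transformed G A sigma in
  let v' := vsig H (lift_strat A sigma') in
  let v := vsig H (lift_strat A sigma) in
  [/\ (forall x : V, v (inl x) <= v' (inl x)),
      (exists x : V, v (inl x) != v' (inl x)) &
      (forall x : V, is_max (vk H (inl x)) -> v' (inl x) = v (inl x) ->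
         lift_strat A sigma' (inl x) = lift_strat A sigma (inl x))].

End Succ.

From HB Require Import structures.
From mathcomp Require Import all_boot all_order all_algebra.
From mathcomp Require Import all_classical all_reals all_analysis.
Set Implicit Arguments. Unset Strict Implicit. Unset Printing Implicit Defensive.
Import Order.TTheory GRing.Theory Num.Theory.
Import numFieldNormedType.Exports.
Local Open Scope ring_scope.

(* Let v be the value of sigma in G, and a, b the values of sigma', sigma in
   G[A,sigma] on the vertices of G.  Replacing arcs by sinks that already carry
   the value v does not change the value of sigma, so b = v, and the hypothesis
   says a >= v, with sigma'(x) = sigma(x) wherever a(x) = v(x).
   Fix a MIN strategy tau and let W = Z(sigma',tau).  In G[A,sigma] a play from
   W under (sigma',tau) either stays in W, earning 0, or is absorbed in a new
   sink s_(x,y) with y in W, earning v(y); hence a <= max_W v on W.  Where v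
   attains this maximum M we get a = v, so sigma' agrees with sigma there; as v
   is an average at MAX and random vertices and can only grow along tau at MIN
   vertices, the set {v = M} of W is absorbing for (sigma,tau), which forces
   M = 0.  So a = v on W, sigma' = sigma on W, and W is absorbing for
   (sigma,tau): Z(sigma',tau) is contained in Z(sigma,tau), hence in Z(sigma).
   Best responses exist (a MIN strategy minimizing the sum of the values is
   one), and so does a tau with the largest Z(sigma,tau); thus v_sigma and
   Z(sigma) are the intended objects. *)

Section AbsorbingValue.
Variables (R : realType) (V : finType).
Variables (P : V -> V -> R) (B : pred V) (b : V -> R).
Hypothesis P_ge0 : forall x y, 0 <= P x y.
Hypothesis P_sum1 : forall x, \sum_y P x y = 1.
Hypothesis b_bound : forall x, B x -> 0 <= b x <= 1.

Fixpoint absorb_iter (n : nat) (x : V) : R :=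
  if B x then b x
  else if n is n'.+1 then \sum_y P x y * absorb_iter n' y else 0.

Definition absorb_value (x : V) : R := limn (absorb_iter ^~ x).

Lemma absorb_iter_B n x : B x -> absorb_iter n x = b x.
Proof. by case: n => [|n] /= ->. Qed.

Lemma absorb_iter_bound n x : 0 <= absorb_iter n x <= 1.
Proof.
elim: n x => [|n IH] x /=; case: ifP => Bx; rewrite ?b_bound ?lexx ?ler01 //.
apply/andP; split.
  by apply: sumr_ge0 => y _; rewrite mulr_ge0 ?P_ge0 //; case/andP: (IH y).
rewrite -(P_sum1 x); apply: ler_sum => y _.
by rewrite ler_piMr ?P_ge0 //; case/andP: (IH y).
Qed.

Lemma absorb_iter_nondecreasing x : nondecreasing_seq (absorb_iter ^~ x).
Proof.
apply/nondecreasing_seqP => n; elim: n x => [|n IH] x /=; case: ifP => Bx //.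
  by apply: sumr_ge0 => y _; rewrite mulr_ge0 ?P_ge0 //; case/andP: (absorb_iter_bound 0 y).
by apply: ler_sum => y _; rewrite ler_wpM2l ?P_ge0.
Qed.

Lemma absorb_iter_cvg x : cvgn (absorb_iter ^~ x).
Proof.
apply: nondecreasing_is_cvgn; first exact: absorb_iter_nondecreasing.
by exists 1 => _ [n _ <-]; case/andP: (absorb_iter_bound n x).
Qed.

Lemma absorb_iter_le_value n x : absorb_iter n x <= absorb_value x.
Proof. exact: (nondecreasing_cvgn_le (@absorb_iter_nondecreasing x) (@absorb_iter_cvg x) n). Qed.

Lemma absorb_value_le x c :
  (forall n, absorb_iter n x <= c) -> absorb_value x <= c.
Proof.
move=> le_c; apply: limr_le; first exact: absorb_iter_cvg.
by near=> n; apply: le_c.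
Unshelve. all: by end_near.
Qed.

Lemma absorb_value_bound x : 0 <= absorb_value x <= 1.
Proof.
apply/andP; split; last by apply: absorb_value_le => n; case/andP: (absorb_iter_bound n x).
by apply: le_trans (absorb_iter_le_value 0 x); case/andP: (absorb_iter_bound 0 x).
Qed.

Lemma absorb_value_B x : B x -> absorb_value x = b x.
Proof.
move=> Bx; apply/eqP; rewrite eq_le -{2}(absorb_iter_B 0 Bx) absorb_iter_le_value andbT.
by apply: absorb_value_le => n; rewrite absorb_iter_B.
Qed.

Lemma absorb_value_harmonic x :
  ~~ B x -> absorb_value x = \sum_y P x y * absorb_value y.
Proof.
move=> Bx; apply/eqP; rewrite eq_le; apply/andP; split.
  apply: absorb_value_le => n; apply: le_trans (@absorb_iter_nondecreasing x _ _ (leqnSn n)) _.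
  rewrite /= (negbTE Bx); apply: ler_sum => y _.
  by rewrite ler_wpM2l ?P_ge0 ?absorb_iter_le_value.
have cvg_step : ((fun n => \sum_y P x y * absorb_iter n y) @ \oo -->
    \sum_y P x y * absorb_value y)%classic.
  apply: cvg_big => [|y _]; first exact: add_continuous.
  by apply: cvgMl_tmp; apply: absorb_iter_cvg.
rewrite -(cvg_lim _ cvg_step) //; apply: limr_le; first by apply/cvg_ex; eexists; apply: cvg_step.
by near=> n; have := absorb_iter_le_value n.+1 x; rewrite /= (negbTE Bx).
Unshelve. all: by end_near.
Qed.

Lemma absorb_value_le_superharmonic (g : V -> R) :
  (forall x, 0 <= g x) -> (forall x, B x -> b x <= g x) ->
  (forall x, ~~ B x -> \sum_y P x y * g y <= g x) ->
  forall x, absorb_value x <= g x.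
Proof.
move=> g_ge0 g_B g_super x; apply: absorb_value_le => n.
elim: n x => [|n IH] x /=; case: ifP => Bx; rewrite ?g_B ?g_ge0 //.
apply: le_trans (g_super _ (negbT Bx)); apply: ler_sum => y _.
by rewrite ler_wpM2l ?P_ge0.
Qed.

End AbsorbingValue.

Section ConvexCombination.
Variables (R : numDomainType) (V : finType) (p : V -> R).
Hypothesis p_ge0 : forall y, 0 <= p y.
Hypothesis p_sum1 : \sum_y p y = 1.

Lemma convex_le (f : V -> R) c :
  (forall y, p y != 0 -> f y <= c) -> \sum_y p y * f y <= c.
Proof.
move=> f_le; rewrite -[leRHS]mul1r -p_sum1 mulr_suml; apply: ler_sum => y _.
by have [->|/f_le] := eqVneq (p y) 0; rewrite ?mul0r // => /ler_wpM2l->.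
Qed.

Lemma convex_eq_max (f : V -> R) c y : (forall y, p y != 0 -> f y <= c) ->
  c <= \sum_y p y * f y -> p y != 0 -> f y = c.
Proof.
move=> f_le c_le py0; have gap_ge0 z : 0 <= p z * (c - f z).
  by have [->|/f_le] := eqVneq (p z) 0; rewrite ?mul0r // -subr_ge0; apply: mulr_ge0.
have : \sum_z p z * (c - f z) = 0.
  apply/eqP; rewrite eq_le sumr_ge0 // andbT.
  under eq_bigr do rewrite mulrBr [p _ * c]mulrC.
  by rewrite sumrB -mulr_sumr p_sum1 mulr1 subr_le0.
move=> /(psumr_eq0P (fun z _ => gap_ge0 z)) /(_ y isT) /eqP.
by rewrite mulf_eq0 (negbTE py0) subr_eq0 => /eqP.
Qed.

End ConvexCombination.

Lemma sum_pred1_mul (R : numDomainType) (V : finType) (a : V) (f : V -> R) :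
  \sum_y (a == y)%:R * f y = f a.
Proof.
rewrite (bigD1 a) //= eqxx mul1r big1 ?addr0 // => y.
by rewrite eq_sym => /negbTE ->; rewrite mul0r.
Qed.

Section Transitions.
Variables (R : realType) (V : finType) (K : ssg R V).
Implicit Types (s t : {ffun V -> V}) (S : {set V}).

Lemma trans_max s t x : is_max (vk K x) -> trans K s t x =1 fun y => (s x == y)%:R.
Proof. by rewrite /trans; case: (vk K x). Qed.

Lemma trans_min s t x : is_min (vk K x) -> trans K s t x =1 fun y => (t x == y)%:R.
Proof. by rewrite /trans; case: (vk K x). Qed.

Lemma eq_trans_max s s' t x :
  (is_max (vk K x) -> s x = s' x) -> trans K s t x =1 trans K s' t x.
Proof. by rewrite /trans; case: (vk K x) => // /(_ isT) ->. Qed.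

Lemma eq_trans_min s t t' x :
  (is_min (vk K x) -> t x = t' x) -> trans K s t x =1 trans K s t' x.
Proof. by rewrite /trans; case: (vk K x) => // /(_ isT) ->. Qed.

Lemma sum_trans_max s t x (f : V -> R) :
  is_max (vk K x) -> \sum_y trans K s t x y * f y = f (s x).
Proof. by move=> /trans_max eq_t; under eq_bigr do rewrite eq_t; apply: sum_pred1_mul. Qed.

Lemma sum_trans_min s t x (f : V -> R) :
  is_min (vk K x) -> \sum_y trans K s t x y * f y = f (t x).
Proof. by move=> /trans_min eq_t; under eq_bigr do rewrite eq_t; apply: sum_pred1_mul. Qed.

Definition trans_closed s t S :=
  forall x y, x \in S -> trans K s t x y != 0 -> y \in S.

Definition patch S (t t' : {ffun V -> V}) : {ffun V -> V} :=
  [ffun y => if y \in S then t y else t' y].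

Lemma patch_min_strategy S t t' :
  min_strategy K t -> min_strategy K t' -> min_strategy K (patch S t t').
Proof.
move=> /forallP t_min /forallP t'_min; apply/forallP => x; rewrite ffunE.
by case: ifP.
Qed.

Lemma trans_patch_in s S t t' x : x \in S -> trans K s (patch S t t') x =1 trans K s t x.
Proof. by move=> xS; apply: eq_trans_min; rewrite ffunE xS. Qed.

Lemma trans_patch_out s S t t' x : x \notin S -> trans K s (patch S t t') x =1 trans K s t' x.
Proof. by move=> /negbTE xS; apply: eq_trans_min; rewrite ffunE xS. Qed.

End Transitions.

Definition ssg_stochastic (R : realType) (V : finType) (K : ssg R V) : Prop :=
  (forall x, is_rand (vk K x) -> (forall y, 0 <= gprob K x y) /\ \sum_y gprob K x y = 1) /\
  (forall x, is_sink (vk K x) -> 0 <= sinkval K x <= 1).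

Definition has_min_moves (R : realType) (V : finType) (K : ssg R V) : Prop :=
  forall x, is_min (vk K x) -> exists y, garc K x y.

Lemma ssg_wf_stochastic (R : realType) (V : finType) (G : ssg R V) :
  ssg_wf G -> ssg_stochastic G.
Proof.
case=> _ _ _ G_rand G_sink; split=> // x /G_rand [p_pos p_zero p_sum1]; split=> // y.
by have [/p_pos/ltW|/p_zero->] := boolP (garc G x y).
Qed.

Lemma ssg_wf_min_moves (R : realType) (V : finType) (G : ssg R V) :
  ssg_wf G -> has_min_moves G.
Proof. by case=> _ G_moves _ _ _ x x_min; apply: G_moves; case: (vk G x) x_min. Qed.

Section Chain.
Variables (R : realType) (V : finType) (K : ssg R V).
Hypothesis K_stoch : ssg_stochastic K.
Implicit Types (s t : {ffun V -> V}) (S Z : {set V}).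

Lemma trans_ge0 s t x y : 0 <= trans K s t x y.
Proof.
rewrite /trans; case E: (vk K x) => //; rewrite ?ler0n //.
by case: (K_stoch.1 x); rewrite ?E.
Qed.

Lemma trans_sum1 s t x : \sum_y trans K s t x y = 1.
Proof.
have sum_eq1 (a : V) : \sum_y ((a == y)%:R : R) = 1.
  by rewrite (bigD1 a) //= eqxx big1 ?addr0 // => y; rewrite eq_sym => /negbTE ->.
rewrite /trans; case E: (vk K x); rewrite ?sum_eq1 //.
by case: (K_stoch.1 x); rewrite ?E.
Qed.

Lemma sum_trans_le s t x (f : V -> R) c :
  (forall y, trans K s t x y != 0 -> f y <= c) -> \sum_y trans K s t x y * f y <= c.
Proof. exact/convex_le/trans_sum1/trans_ge0. Qed.

Lemma sum_trans_eq_max s t x (f : V -> R) c y :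
  (forall y, trans K s t x y != 0 -> f y <= c) -> c <= \sum_y trans K s t x y * f y ->
  trans K s t x y != 0 -> f y = c.
Proof. exact/convex_eq_max/trans_sum1/trans_ge0. Qed.

Let sinkval_bound x : is_sink (vk K x) -> 0 <= sinkval K x <= 1 := K_stoch.2 x.

Lemma valsE s t x :
  vals K s t x = absorb_value (trans K s t) (fun y => is_sink (vk K y)) (sinkval K) x.
Proof.
congr (limn _); apply: funext => n; elim: n x => [|n IH] x //=.
by case: ifP => // _; under eq_bigr do rewrite IH.
Qed.

Lemma vals_bound s t x : 0 <= vals K s t x <= 1.
Proof. by rewrite valsE; apply: absorb_value_bound; [apply: trans_ge0 | apply: trans_sum1 |]. Qed.

Lemma vals_ge0 s t x : 0 <= vals K s t x.
Proof. by case/andP: (vals_bound s t x). Qed.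

Lemma vals_sink s t x : is_sink (vk K x) -> vals K s t x = sinkval K x.
Proof. by rewrite valsE; apply: absorb_value_B; [apply: trans_ge0 | apply: trans_sum1 |]. Qed.

Lemma vals_harmonic s t x :
  ~~ is_sink (vk K x) -> vals K s t x = \sum_y trans K s t x y * vals K s t y.
Proof.
move=> xNs; rewrite valsE absorb_value_harmonic //; last exact: trans_sum1.
  by under eq_bigr do rewrite -valsE.
exact: trans_ge0.
Qed.

Lemma vals_le_superharmonic s t (g : V -> R) :
  (forall x, 0 <= g x) -> (forall x, is_sink (vk K x) -> sinkval K x <= g x) ->
  (forall x, ~~ is_sink (vk K x) -> \sum_y trans K s t x y * g y <= g x) ->
  forall x, vals K s t x <= g x.
Proof.
move=> g_ge0 g_sink g_super x; rewrite valsE.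
by apply: absorb_value_le_superharmonic => //; [apply: trans_ge0 | apply: trans_sum1].
Qed.

Lemma reach_probE s t T x :
  reach_prob K s t T x = absorb_value (trans K s t) (mem T) (fun=> 1) x.
Proof.
congr (limn _); apply: funext => n; elim: n x => [|n IH] x /=; first by case: (x \in T).
by case: ifP => // _; under eq_bigr do rewrite IH.
Qed.

Lemma absorbingP s t Z :
  reflect (trans_closed K s t Z /\ Z \subset ~: sinks K) (absorbing K s t Z).
Proof.
have [P_ge0 P_sum1] := (trans_ge0 s t, trans_sum1 s t).
have one_bound (x : V) : x \in ~: Z -> 0 <= (1 : R) <= 1 by rewrite ler01 lexx.
apply: (iffP andP) => [[Z_sinkfree Z_absorb] | [Z_closed Z_sinkfree]]; split=> //.
  move=> x y xZ; apply: contraTT => yNZ; move/forall_inP: Z_absorb => /(_ x xZ) /eqP.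
  rewrite reach_probE absorb_value_harmonic ?inE ?negbK // => /(psumr_eq0P _) /(_ y isT).
  rewrite (absorb_value_B P_ge0 P_sum1 one_bound) ?inE // mulr1 => ->; first by rewrite eqxx.
  by move=> u _; rewrite mulr_ge0 //; case/andP: (absorb_value_bound P_ge0 P_sum1 one_bound u).
apply/forall_inP => x xZ; rewrite reach_probE eq_le; apply/andP; split; last first.
  by case/andP: (absorb_value_bound P_ge0 P_sum1 one_bound x).
pose g y : R := (y \notin Z)%:R.
apply: le_trans (absorb_value_le_superharmonic P_ge0 P_sum1 one_bound (g := g) _ _ _ x) _.
- by move=> y; apply: ler0n.
- by move=> y; rewrite /g inE => ->.
- move=> y; rewrite inE negbK /g => yZ; rewrite yZ.
  by apply: convex_le => // u /(Z_closed _ _ yZ) ->.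
- by rewrite /g xZ.
Qed.

Lemma Zst_absorbing s t : absorbing K s t (Zst K s t).
Proof.
apply/absorbingP; split.
  move=> x y /bigcupP [Z Z_abs xZ] txy; apply/bigcupP; exists Z => //.
  by case/absorbingP: Z_abs => Z_closed _; apply: Z_closed xZ txy.
by apply/bigcupsP => Z /absorbingP [].
Qed.

Lemma sub_Zst s t Z : absorbing K s t Z -> Z \subset Zst K s t.
Proof. exact: finset.bigcup_sup. Qed.

Lemma vals_absorbing_eq0 s t Z x : absorbing K s t Z -> x \in Z -> vals K s t x = 0.
Proof.
move=> /absorbingP [Z_closed /fintype.subsetP Z_sinkfree] xZ; apply/eqP.
rewrite eq_le vals_ge0 andbT.
pose g y : R := (y \notin Z)%:R.
apply: le_trans (vals_le_superharmonic (g := g) _ _ _ x) _; rewrite /g ?xZ //.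
- move=> y ys; have [/Z_sinkfree|_] := boolP (y \in Z); first by rewrite !inE ys.
  by case/andP: (sinkval_bound ys).
- move=> y _; have [yZ|_] := boolP (y \in Z).
    by apply: sum_trans_le => u /(Z_closed _ _ yZ) ->.
  by apply: sum_trans_le => u _; case: (u \in Z).
Qed.

End Chain.

Lemma best_response_le (R : realType) (V : finType) (K : ssg R V) (s t t' : {ffun V -> V}) :
  best_response K s t -> min_strategy K t' -> forall x, vals K s t x <= vals K s t' x.
Proof. by case/andP=> _ /forall_inP/(_ t') br /br /forallP. Qed.

Section BestResponse.
Variables (R : realType) (V : finType) (K : ssg R V).
Hypothesis K_stoch : ssg_stochastic K.
Hypothesis K_min_moves : has_min_moves K.
Variable s : {ffun V -> V}.
Implicit Types (t : {ffun V -> V}) (Z : {set V}).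

Lemma min_strategy_exists : exists t, min_strategy K t.
Proof.
exists [ffun x => odflt x [pick y | garc K x y]]; apply/forallP => x.
apply/implyP => /K_min_moves [y xy]; rewrite ffunE.
by case: pickP => [//|/(_ y)]; rewrite xy.
Qed.

Definition redirect t x z : {ffun V -> V} := patch [set x] [ffun=> z] t.

Lemma vals_redirect_lt t x z :
  min_strategy K t -> is_min (vk K x) -> garc K x z -> vals K s t z < vals K s t x ->
  [/\ min_strategy K (redirect t x z),
      forall y, vals K s (redirect t x z) y <= vals K s t y &
      vals K s (redirect t x z) x < vals K s t x].
Proof.
move=> /forallP t_min x_min xz lt_zx; set t' := redirect t x z.
have t'_min : min_strategy K t'.
  by apply/forallP => y; rewrite !ffunE inE; case: eqP => [->|_]; rewrite ?x_min.
pose g y := if y == x then vals K s t z else vals K s t y.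
have g_le y : g y <= vals K s t y by rewrite /g; case: eqP => [->|_]; rewrite ?(ltW lt_zx).
have le_g : forall y, vals K s t' y <= g y.
  apply: vals_le_superharmonic => // [y|y y_sink|y y_nsink].
  - by rewrite /g; case: ifP; rewrite vals_ge0.
  - rewrite /g; case: eqP => [eq_yx|_]; last by rewrite vals_sink.
    by move: x_min; rewrite -eq_yx; case: (vk K y) y_sink.
  - have [->|neq_yx] := eqVneq y x.
      rewrite sum_trans_min // !ffunE set11 /g eqxx ifN //.
    by apply: contraTneq lt_zx => ->; rewrite ltxx.
    rewrite /g (negbTE neq_yx) [leRHS]vals_harmonic //; apply: ler_sum => u _.
    rewrite /t' /redirect trans_patch_out ?inE //.
    exact: (ler_wpM2l (trans_ge0 K_stoch s t y u) (g_le u)).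
split=> // [y|]; first exact: le_trans (le_g y) (g_le y).
by apply: le_lt_trans (le_g x) _; rewrite /g eqxx.
Qed.

Lemma best_response_min_le t x z :
  best_response K s t -> is_min (vk K x) -> garc K x z -> vals K s t x <= vals K s t z.
Proof.
move=> t_best x_min xz; rewrite leNgt; apply/negP => /(vals_redirect_lt _ x_min xz).
case: (andP t_best) => t_min _ /(_ t_min) [t'_min _].
by apply/negP; rewrite -leNgt best_response_le.
Qed.

Lemma vals_le_sum_trans t' t y :
  (forall x z, is_min (vk K x) -> garc K x z -> vals K s t' x <= vals K s t' z) ->
  min_strategy K t -> ~~ is_sink (vk K y) ->
  vals K s t' y <= \sum_u trans K s t y u * vals K s t' u.
Proof.
move=> t'_bellman /forallP t_min y_nsink; have [y_min|y_nmin] := boolP (is_min (vk K y)).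
  by rewrite sum_trans_min // t'_bellman // (implyP (t_min y) y_min).
have eq_tr : trans K s t' y =1 trans K s t y by apply: eq_trans_min => /(negP y_nmin).
by rewrite [leLHS]vals_harmonic //; apply: ler_sum => u _; rewrite eq_tr.
Qed.

Section SumMinimizer.
Variable ts : {ffun V -> V}.
Hypothesis ts_min : min_strategy K ts.
Hypothesis ts_argmin :
  forall t, min_strategy K t -> \sum_x vals K s ts x <= \sum_x vals K s t x.

Lemma sum_vals_lt t x : (forall y, vals K s t y <= vals K s ts y) ->
  vals K s t x < vals K s ts x -> \sum_y vals K s t y < \sum_y vals K s ts y.
Proof.
move=> le_t lt_x; rewrite (bigD1 x) //= [ltRHS](bigD1 x) //=.
by rewrite ltr_leD // ler_sum.
Qed.

Lemma argmin_bellman x z :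
  is_min (vk K x) -> garc K x z -> vals K s ts x <= vals K s ts z.
Proof.
move=> x_min xz; rewrite leNgt; apply/negP => /(vals_redirect_lt ts_min x_min xz).
case=> t'_min le_t' lt_x; have := ts_argmin t'_min.
by rewrite leNgt (sum_vals_lt le_t' lt_x).
Qed.

Lemma argmin_absorbing_eq0 t Z x :
  min_strategy K t -> absorbing K s t Z -> x \in Z -> vals K s ts x = 0.
Proof.
move=> t_min /(absorbingP K_stoch) [Z_closed /fintype.subsetP Z_sinkfree] xZ.
apply/eqP; rewrite eq_le vals_ge0 // andbT leNgt; apply/negP => vals_gt0.
set t' := patch Z t ts.
pose g y := if y \in Z then 0 else vals K s ts y.
have g_le y : g y <= vals K s ts y by rewrite /g; case: ifP; rewrite ?vals_ge0.
have le_g : forall y, vals K s t' y <= g y.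
  apply: vals_le_superharmonic => // [y|y y_sink|y y_nsink]; rewrite /g.
  - by case: ifP; rewrite ?vals_ge0.
  - case: ifP => [/Z_sinkfree|_]; last by rewrite vals_sink.
    by rewrite !inE y_sink.
  - case: ifP => yZ.
      by apply: sum_trans_le => // u; rewrite trans_patch_in // => /(Z_closed _ _ yZ) ->.
    rewrite [leRHS]vals_harmonic //; apply: ler_sum => u _.
    by rewrite trans_patch_out ?yZ // ler_wpM2l ?trans_ge0 //; case: ifP; rewrite ?vals_ge0.
have := ts_argmin (patch_min_strategy Z t_min ts_min); apply/negP; rewrite -ltNge.
apply: (@sum_vals_lt _ x) => [y|]; first exact: le_trans (le_g y) (g_le y).
by apply: le_lt_trans (le_g x) _; rewrite /g xZ.
Qed.

(* If d = vals ts - vals t had a positive maximum, the set where it is attained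
   would be absorbing for (s,t); but vals ts vanishes there. *)
Lemma argmin_best_response : best_response K s ts.
Proof.
rewrite /best_response ts_min; apply/forall_inP => t t_min; apply/forallP => x.
pose d y := vals K s ts y - vals K s t y.
have [xm _ d_max] := @arg_maxP _ _ _ x predT d isT.
rewrite -subr_le0; apply: le_trans (d_max x isT) _; rewrite leNgt; apply/negP => D_gt0.
pose X := [set y | d y == d xm].
have X_sinkfree : X \subset ~: sinks K.
  apply/fintype.subsetP => y; rewrite !inE => /eqP dy; apply/negP => y_sink.
  by move: D_gt0; rewrite -dy /d !vals_sink // subrr ltxx.
have X_closed : trans_closed K s t X.
  move=> y w yX tyw; have y_nsink : ~~ is_sink (vk K y).
    by have := fintype.subsetP X_sinkfree y yX; rewrite !inE.
  have le_ts := vals_le_sum_trans argmin_bellman t_min y_nsink.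
  rewrite inE; apply/eqP; apply: (sum_trans_eq_max K_stoch _ _ tyw) => [u _|].
    exact: d_max.
  move: yX; rewrite inE => /eqP <-.
  rewrite (eq_bigr (fun u => trans K s t y u * vals K s ts u - trans K s t y u * vals K s t u)).
    by rewrite sumrB /d [X in _ - X]vals_harmonic // lerD2r.
  by move=> u _; rewrite mulrBr.
have X_absorbing : absorbing K s t X by apply/(absorbingP K_stoch).
move: D_gt0; rewrite /d (argmin_absorbing_eq0 t_min X_absorbing) ?inE //.
by rewrite sub0r oppr_gt0 ltNge vals_ge0.
Qed.

End SumMinimizer.

Lemma best_response_exists : exists t, best_response K s t.
Proof.
have [t0 t0_min] := min_strategy_exists.
have [ts ts_min ts_argmin] :=
  @arg_minP _ _ _ t0 (min_strategy K) (fun t => \sum_x vals K s t x) t0_min.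
by exists ts; apply: argmin_best_response.
Qed.

End BestResponse.

Section OptimalResponses.
Variables (R : realType) (V : finType) (K : ssg R V).
Hypothesis K_stoch : ssg_stochastic K.
Hypothesis K_min_moves : has_min_moves K.
Implicit Types (s t : {ffun V -> V}).

Lemma vsig_bound s x : 0 <= vsig K s x <= 1.
Proof. by rewrite /vsig; case: pickP => [t _|_]; rewrite ?vals_bound ?lexx ?ler01. Qed.

Lemma vsig_best_response s : exists2 t, best_response K s t & vsig K s =1 vals K s t.
Proof.
rewrite /vsig; case: pickP => [t t_best|no_best]; first by exists t.
by have [t] := best_response_exists K_stoch K_min_moves s; rewrite no_best.
Qed.

Lemma vsig_le_sum_trans s t y : min_strategy K t -> ~~ is_sink (vk K y) ->
  vsig K s y <= \sum_u trans K s t y u * vsig K s u.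
Proof.
have [tb tb_best vE] := vsig_best_response s.
rewrite vE; under eq_bigr do rewrite vE.
by apply: vals_le_sum_trans => // x z; apply: best_response_min_le.
Qed.

Lemma Zst_union_absorbing s t t' :
  absorbing K s (patch (Zst K s t) t t') (Zst K s t :|: Zst K s t').
Proof.
have [Z_closed Z_sinkfree] := absorbingP K_stoch _ _ _ (Zst_absorbing K_stoch s t).
have [Z'_closed Z'_sinkfree] := absorbingP K_stoch _ _ _ (Zst_absorbing K_stoch s t').
apply/(absorbingP K_stoch); split; last by rewrite finset.subUset Z_sinkfree.
move=> x y; rewrite !inE; have [xZ _|xNZ /= xZ'] := boolP (x \in Zst K s t).
  by rewrite trans_patch_in // => /(Z_closed _ _ xZ) ->.
by rewrite trans_patch_out // => /(Z'_closed _ _ xZ') ->; rewrite orbT.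
Qed.

Lemma Zst_max_exists s : exists2 t, min_strategy K t &
  forall t', min_strategy K t' -> Zst K s t' \subset Zst K s t.
Proof.
have [t0 t0_min] := min_strategy_exists K_min_moves.
have [t t_min t_max] := arg_maxnP (fun t => #|Zst K s t|) t0_min.
exists t => // t' t'_min.
have sub_U : Zst K s t :|: Zst K s t' \subset Zst K s (patch (Zst K s t) t t').
  exact/sub_Zst/Zst_union_absorbing.
have /eqP -> : Zst K s t == Zst K s t :|: Zst K s t'.
  rewrite eqEcard finset.subsetUl; apply: leq_trans (subset_leq_card sub_U) _.
  exact/t_max/patch_min_strategy.
exact: finset.subsetUr.
Qed.

Lemma Zsig_spec s : exists t, [/\ min_strategy K t, Zsig K s = Zst K s t &
  forall t', min_strategy K t' -> Zst K s t' \subset Zst K s t].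
Proof.
rewrite /Zsig; case: pickP => [t /andP [t_min /forall_inP t_max]|no_max].
  by exists t; split=> // t' /t_max.
have [t t_min t_max] := Zst_max_exists s; move: (no_max t); rewrite t_min /=.
by move=> /forall_inP; case=> t' /t_max.
Qed.

End OptimalResponses.

Section Transformed.
Variables (R : realType) (V : finType) (G : ssg R V) (A : {set V * V}).
Variable sigma : {ffun V -> V}.
Local Notation H := (transformed G A sigma).
Implicit Types (s t : {ffun V -> V}).

Definition lift_arc (x y : V) : tV A :=
  match @insub (V * V) (fun e => e \in A) _ (x, y) with
  | Some e => inr e
  | None => inl y
  end.

Definition arc_target (z : tV A) : V :=
  match z with inl y => y | inr e => (val e).2 end.

Lemma lift_arcK x : cancel (lift_arc x) arc_target.
Proof. by move=> y; rewrite /lift_arc; case: insubP => // e _ /= ->. Qed.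

Lemma lift_strat_inl_inj s s' x :
  lift_strat A s (inl x) = lift_strat A s' (inl x) -> s x = s' x.
Proof. by rewrite /lift_strat !ffunE => /(congr1 arc_target); rewrite !lift_arcK. Qed.

Lemma tarc_lift_arc x y : garc H (inl x) (lift_arc x y) = garc G x y.
Proof.
by rewrite /lift_arc; case: insubP => [e _ /= ->|/negbTE yA] /=; rewrite ?eqxx ?yA ?andbT.
Qed.

Lemma lift_arc_target x z : garc H (inl x) z -> lift_arc x (arc_target z) = z.
Proof.
rewrite /lift_arc; case: z => [y /andP [_ /negbTE xyA] | e /andP [/eqP ex _]] /=.
  by rewrite insubF.
by rewrite -ex -surjective_pairing valK.
Qed.

Lemma tprob_lift x z :
  gprob H (inl x) z = (z == lift_arc x (arc_target z))%:R * gprob G x (arc_target z).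
Proof.
rewrite /lift_arc; case: z => [y|e] /=.
  by case: insubP => [e -> _|/negbTE ->] /=; rewrite ?eqxx ?mul0r ?mul1r.
case: eqP => [ex|nex]; first by rewrite -ex -surjective_pairing valK eqxx mul1r.
case: insubP => [e' _ e'E|_] /=; last by rewrite mul0r.
suff /negbTE -> : inr e != inr e' :> tV A by rewrite mul0r.
by apply/eqP => -[ee']; apply: nex; rewrite ee' e'E.
Qed.

Lemma sum_tprob x (g : tV A -> R) :
  \sum_z gprob H (inl x) z * g z = \sum_y gprob G x y * g (lift_arc x y).
Proof.
under eq_bigr do rewrite tprob_lift -mulrA mulr_natl mulrb.
rewrite -big_mkcond (reindex (lift_arc x)) /=; last first.
  by exists arc_target => [y _|z /eqP ->]; rewrite ?lift_arcK.
by apply: eq_big => y; rewrite lift_arcK ?eqxx.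
Qed.

Lemma sum_trans_lift s t x (g : tV A -> R) : ~~ is_sink (vk G x) ->
  \sum_z trans H (lift_strat A s) (lift_strat A t) (inl x) z * g z =
  \sum_y trans G s t x y * g (lift_arc x y).
Proof.
case E: (vk G x) => // _.
- by rewrite (@sum_trans_max _ _ H) /= ?E // sum_trans_max ?E // /lift_strat ffunE.
- by rewrite (@sum_trans_min _ _ H) /= ?E // sum_trans_min ?E // /lift_strat ffunE.
by rewrite /trans /= E sum_tprob.
Qed.

Lemma transformed_stochastic :
  ssg_stochastic G -> (forall y, 0 <= vsig G sigma y <= 1) -> ssg_stochastic H.
Proof.
move=> [G_rand G_sink] vsig_bound; split=> [[x|//] x_rand|[x|e] z_sink]; last 2 first.
- exact: G_sink.
- exact: vsig_bound.
have [p_ge0 p_sum1] := G_rand x x_rand; split=> [z|].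
  by rewrite tprob_lift mulr_ge0 ?ler0n.
have := sum_tprob x (fun=> 1); under eq_bigr do rewrite mulr1.
by under [in RHS]eq_bigr do rewrite mulr1; move=> ->.
Qed.

Lemma transformed_min_moves : has_min_moves G -> has_min_moves H.
Proof.
move=> G_moves [x /G_moves [y xy]|//]; exists (lift_arc x y).
by rewrite tarc_lift_arc.
Qed.

Lemma lift_min_strategy t : min_strategy G t -> min_strategy H (lift_strat A t).
Proof.
move=> /forallP t_min; apply/forallP => -[x|//]; rewrite /lift_strat ffunE.
by rewrite -/(lift_arc x (t x)) tarc_lift_arc; apply: t_min.
Qed.

Definition proj_strat (tH : {ffun tV A -> tV A}) : {ffun V -> V} :=
  [ffun x => arc_target (tH (inl x))].

Lemma proj_min_strategy tH : min_strategy H tH -> min_strategy G (proj_strat tH).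
Proof.
move=> /forallP tH_min; apply/forallP => x; apply/implyP => x_min.
have xz := implyP (tH_min (inl x)) x_min.
by rewrite ffunE -tarc_lift_arc lift_arc_target.
Qed.

Lemma lift_proj_strat tH x : min_strategy H tH -> is_min (vk G x) ->
  lift_strat A (proj_strat tH) (inl x) = tH (inl x).
Proof.
move=> /forallP /(_ (inl x)) /implyP tH_min x_min.
by rewrite /lift_strat !ffunE -/(lift_arc _ _) lift_arc_target // tH_min.
Qed.

End Transformed.

Section TransformedValues.
Variables (R : realType) (V : finType) (G : ssg R V) (A : {set V * V}).
Variable sigma : {ffun V -> V}.
Hypothesis G_stoch : ssg_stochastic G.
Hypothesis G_moves : has_min_moves G.
Local Notation H := (transformed G A sigma).
Local Notation v := (vsig G sigma).

Let H_stoch : ssg_stochastic H :=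
  transformed_stochastic A G_stoch (vsig_bound G_stoch sigma).
Let H_moves : has_min_moves H := transformed_min_moves G_moves.

Lemma vsig_transformed_le x : vsig H (lift_strat A sigma) (inl x) <= v x.
Proof.
have [tb /andP [tb_min _] vE] := vsig_best_response G_stoch G_moves sigma.
have [tc tc_best vHE] := vsig_best_response H_stoch H_moves (lift_strat A sigma).
rewrite vHE; apply: le_trans (best_response_le tc_best (lift_min_strategy A sigma tb_min) _) _.
pose g (z : tV A) := v (arc_target z).
rewrite -[v x]/(g (inl x)); apply: (vals_le_superharmonic H_stoch) => [z|[w|e]|[w|//]] /=.
- by case/andP: (vsig_bound G_stoch sigma (arc_target z)).
- by move=> w_sink; rewrite /g vE vals_sink.
- by [].
move=> w_nsink; rewrite sum_trans_lift //; under eq_bigr do rewrite /g lift_arcK.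
by rewrite /g /= vE [leRHS]vals_harmonic //; under eq_bigr do rewrite vE.
Qed.

Lemma vsig_transformed_lift x : vsig H (lift_strat A sigma) (inl x) = v x.
Proof.
apply/eqP; rewrite eq_le vsig_transformed_le /=.
have [tb tb_best vE] := vsig_best_response G_stoch G_moves sigma.
have [tc /[dup] /andP [tc_min _] tc_best vHE] :=
  vsig_best_response H_stoch H_moves (lift_strat A sigma).
rewrite vE; apply: le_trans (best_response_le tb_best (proj_min_strategy tc_min) x) _.
pose f w := vsig H (lift_strat A sigma) (inl w).
rewrite -/(f x); apply: (vals_le_superharmonic G_stoch) => [w|w w_sink|w w_nsink].
- by case/andP: (vsig_bound H_stoch (lift_strat A sigma) (inl w)).
- by rewrite /f vHE vals_sink.
apply: (@le_trans _ _ (\sum_y trans G sigma (proj_strat tc) w y *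
                          vsig H (lift_strat A sigma) (lift_arc A w y))).
  apply: ler_sum => y _; apply: ler_wpM2l; first exact: trans_ge0.
  rewrite /lift_arc; case: insubP => // e _ eE.
  by rewrite vHE vals_sink //= eE vsig_transformed_le.
rewrite -(sum_trans_lift sigma) // /f vHE [leRHS]vals_harmonic //.
apply: ler_sum => z _; rewrite vHE (@eq_trans_min _ _ H _ _ tc) //.
by move=> w_min; rewrite (lift_proj_strat tc_min w_min).
Qed.

Lemma vsig_transformed_le_absorbing s t W M :
  min_strategy G t -> absorbing G s t W -> 0 <= M <= 1 -> {in W, forall u, v u <= M} ->
  {in W, forall y, vsig H (lift_strat A s) (inl y) <= M}.
Proof.
move=> t_min /(absorbingP G_stoch) [W_closed /fintype.subsetP W_sinkfree] M_bound v_le y yW.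
have [ta ta_best vHE] := vsig_best_response H_stoch H_moves (lift_strat A s).
rewrite vHE; apply: le_trans (best_response_le ta_best (lift_min_strategy A sigma t_min) _) _.
pose g (z : tV A) := if z is inr e then v (val e).2 else if arc_target z \in W then M else 1.
have g_bound z : 0 <= g z <= 1.
  by case: z => [w|e] /=; [case: ifP; rewrite ?ler01 ?lexx | apply: vsig_bound].
have g_le w u : u \in W -> g (lift_arc A w u) <= M.
  by rewrite /g /lift_arc; case: insubP => [e _ /= ->|_ /= ->] //; apply: v_le.
apply: le_trans (vals_le_superharmonic H_stoch (g := g) _ _ _ (inl y)) _.
- by move=> z; case/andP: (g_bound z).
- case=> [w|e] /= w_sink //; case: ifP => [/W_sinkfree|_]; first by rewrite !inE w_sink.
  by case/andP: (G_stoch.2 w w_sink).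
- case=> [w|//] w_nsink; rewrite (sum_trans_lift sigma) //; apply: sum_trans_le => // u tu.
  rewrite [g (inl w)]/g /=; case: ifP => [wW|_]; last by case/andP: (g_bound (lift_arc A w u)).
  exact/g_le/(W_closed _ _ wW tu).
by rewrite /g /= yW.
Qed.

End TransformedValues.

Section Improvement.
Variables (R : realType) (V : finType) (G : ssg R V) (A : {set V * V}).
Variables sigma sigma' : {ffun V -> V}.
Hypothesis G_stoch : ssg_stochastic G.
Hypothesis G_moves : has_min_moves G.
Hypothesis improving : succ_transformed G A sigma sigma'.
Local Notation H := (transformed G A sigma).
Local Notation v := (vsig G sigma).

Lemma succ_transformed_agree x : is_max (vk G x) ->
  vsig H (lift_strat A sigma') (inl x) <= v x -> sigma' x = sigma x.
Proof.
case: improving => le_val _ keep x_max le_v; apply/lift_strat_inl_inj/keep => //.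
by apply/eqP; rewrite eq_le le_val andbT vsig_transformed_lift.
Qed.

Lemma succ_transformed_agree_Zst t M y :
  min_strategy G t -> 0 <= M <= 1 -> {in Zst G sigma' t, forall u, v u <= M} ->
  y \in Zst G sigma' t -> is_max (vk G y) -> M <= v y -> sigma' y = sigma y.
Proof.
move=> t_min M_bound v_le yW y_max M_le; apply: succ_transformed_agree => //.
apply: (le_trans _ M_le); apply: (vsig_transformed_le_absorbing _ _ _ t_min) yW => //.
exact: Zst_absorbing.
Qed.

Lemma vsig_Zst_eq0 t x : min_strategy G t -> x \in Zst G sigma' t -> v x = 0.
Proof.
move=> t_min xW; set W := Zst G sigma' t.
have [W_closed W_sinkfree] := absorbingP G_stoch _ _ _ (Zst_absorbing G_stoch sigma' t).
have [ym ymW ym_max] := @arg_maxP _ _ _ x (mem W) v xW.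
set M := v ym; pose S := [set y in W | v y == M].
have S_absorbing : absorbing G sigma t S.
  apply/(absorbingP G_stoch); split; last first.
    apply: fintype.subset_trans W_sinkfree.
    by apply/fintype.subsetP => y; rewrite inE => /andP [].
  move=> y w; rewrite inE => /andP [yW /eqP vy] tyw.
  have agree : is_max (vk G y) -> sigma' y = sigma y.
    move=> y_max; apply: (succ_transformed_agree_Zst t_min (vsig_bound G_stoch sigma ym)) => //.
    by rewrite vy.
  have inW u : trans G sigma t y u != 0 -> u \in W.
    by move=> tyu; apply: (W_closed y u yW); rewrite (eq_trans_max t agree).
  have y_nsink : ~~ is_sink (vk G y).
    by have := fintype.subsetP W_sinkfree y yW; rewrite !inE.
  rewrite inE inW //=; apply/eqP; apply: (sum_trans_eq_max G_stoch _ _ tyw).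
    by move=> u /inW; apply: ym_max.
  by rewrite -vy vsig_le_sum_trans.
have ymS : ym \in S by rewrite inE (ymW : ym \in W) eqxx.
have [tb tb_best vE] := vsig_best_response G_stoch G_moves sigma.
have M_le0 : M <= 0.
  by rewrite /M vE -(vals_absorbing_eq0 G_stoch S_absorbing ymS) best_response_le.
apply/eqP; rewrite eq_le (le_trans (ym_max x xW) M_le0).
by case/andP: (vsig_bound G_stoch sigma x).
Qed.

Lemma succ_transformed_Zst_sub t : min_strategy G t -> Zst G sigma' t \subset Zst G sigma t.
Proof.
move=> t_min; apply/sub_Zst/(absorbingP G_stoch).
have [W_closed W_sinkfree] := absorbingP G_stoch _ _ _ (Zst_absorbing G_stoch sigma' t).
split=> // x y xW; have agree : is_max (vk G x) -> sigma' x = sigma x.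
  move=> x_max; apply: (succ_transformed_agree_Zst (M := 0) t_min) => //.
  - by rewrite lexx ler01.
  - by move=> u uW; rewrite (vsig_Zst_eq0 t_min uW).
  - by rewrite (vsig_Zst_eq0 t_min xW).
by rewrite -(eq_trans_max t agree); apply: W_closed.
Qed.

End Improvement.

Theorem proposition21 (R : realType) (V : finType) (G : ssg R V)
    (A : {set V * V}) (sigma sigma' : {ffun V -> V}) :
  ssg_wf G -> ssg_rational G ->
  A \subset [set e | garc G e.1 e.2] ->
  max_strategy G sigma -> max_strategy G sigma' ->
  succ_transformed G A sigma sigma' ->
  (Zsig G sigma' \subset Zsig G sigma)%SET.
Proof.
move=> G_wf _ _ _ _ improving.
have [G_stoch G_moves] := (ssg_wf_stochastic G_wf, ssg_wf_min_moves G_wf).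
have [tau [tau_min -> _]] := Zsig_spec G_stoch G_moves sigma'.
have [t [_ -> t_max]] := Zsig_spec G_stoch G_moves sigma.
apply: fintype.subset_trans (t_max _ tau_min).
exact: (succ_transformed_Zst_sub G_stoch G_moves improving tau_min).
Qed.
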